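(* Let $\mathcal{A}$ be a $3\times 3$ octonionic Hermitian matrix ($\mathcal{A}^\dagger=\mathcal{A}$), and let $v\in\mathbb{O}^3$, $\lambda\in\mathbb{O}$ satisfy $\mathcal{A}v=v\lambda$ and $v^\dagger v=1$. Then $$v^\dagger(\mathcal{A}v)=\lambda \qquad\text{and}\qquad [v^\dagger,\mathcal{A},v]:=(v^\dagger\mathcal{A})v-v^\dagger(\mathcal{A}v)=-2\,\mathrm{Im}(\lambda).$$
   Context: $\mathbb{O}$ denotes the octonions; $v^\dagger$ is the conjugate transpose (row vector of conjugated entries); all products of vectors and matrices are computed entrywise with octonionic multiplication in the order written, parenthesized as indicated. $\mathrm{Im}(\lambda)=\tfrac12(\lambda-\overline{\lambda})$. $v\lambda$ means each component of $v$ multiplied on the right by $\lambda$. *)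

(* Octonions over an arbitrary real field R, built by the
   Cayley--Dickson construction R -> C -> H -> O with the convention
   (a,b)(c,d) = (ac - conj(d) b, d a + b conj(c)),  conj (a,b) = (conj a, -b). *)
From mathcomp Require Import all_boot all_order all_algebra.
Set Implicit Arguments. Unset Strict Implicit. Unset Printing Implicit Defensive.
Import Order.TTheory GRing.Theory Num.Theory.
Local Open Scope ring_scope.

Section Octonions.
Variable R : realFieldType.

Definition cpx := (R * R)%type.
Definition cadd (x y : cpx) : cpx := (x.1 + y.1, x.2 + y.2).
Definition copp (x : cpx) : cpx := (- x.1, - x.2).
Definition cconj (x : cpx) : cpx := (x.1, - x.2).
Definition cmul (x y : cpx) : cpx :=
  (x.1 * y.1 - y.2 * x.2, y.2 * x.1 + x.2 * y.1).
Definition cscale (r : R) (x : cpx) : cpx := (r * x.1, r * x.2).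
Definition czero : cpx := (0, 0).

Definition quat := (cpx * cpx)%type.
Definition qadd (x y : quat) : quat := (cadd x.1 y.1, cadd x.2 y.2).
Definition qopp (x : quat) : quat := (copp x.1, copp x.2).
Definition qconj (x : quat) : quat := (cconj x.1, copp x.2).
Definition qmul (x y : quat) : quat :=
  (cadd (cmul x.1 y.1) (copp (cmul (cconj y.2) x.2)),
   cadd (cmul y.2 x.1) (cmul x.2 (cconj y.1))).
Definition qscale (r : R) (x : quat) : quat := (cscale r x.1, cscale r x.2).
Definition qzero : quat := (czero, czero).

Definition oct := (quat * quat)%type.
Definition oadd (x y : oct) : oct := (qadd x.1 y.1, qadd x.2 y.2).
Definition oopp (x : oct) : oct := (qopp x.1, qopp x.2).
Definition osub (x y : oct) : oct := oadd x (oopp y).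
Definition oconj (x : oct) : oct := (qconj x.1, qopp x.2).
Definition omul (x y : oct) : oct :=
  (qadd (qmul x.1 y.1) (qopp (qmul (qconj y.2) x.2)),
   qadd (qmul y.2 x.1) (qmul x.2 (qconj y.1))).
Definition oscale (r : R) (x : oct) : oct := (qscale r x.1, qscale r x.2).
Definition ozero : oct := (qzero, qzero).
Definition oone : oct := (((1, 0), czero), qzero).

Definition oIm (x : oct) : oct := oscale (2^-1) (osub x (oconj x)).

Definition ovec := 'I_3 -> oct.
Definition omat := 'I_3 -> 'I_3 -> oct.

Definition osum (F : 'I_3 -> oct) : oct := \big[oadd/ozero]_(i < 3) F i.

Definition oHermitian (A : omat) : Prop := forall i j, oconj (A j i) = A i j.

Definition matvec (A : omat) (v : ovec) : ovec := fun i => osum (fun j => omul (A i j) (v j)).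
Definition dagmat (v : ovec) (A : omat) : ovec := fun j => osum (fun i => omul (oconj (v i)) (A i j)).
Definition rowcol (r c : ovec) : oct := osum (fun i => omul (r i) (c i)).
Definition dagvec (v w : ovec) : oct := rowcol (fun i => oconj (v i)) w.
Definition vecscal (v : ovec) (l : oct) : ovec := fun i => omul (v i) l.

End Octonions.

(** Octonions are alternative, so [conj x * (x * y) = n(x) y] and
    [(y * conj x) * x = n(x) y] with [n(x)] the quadratic norm.  The first
    identity gives [v^+ (v l) = (sum_i n(v_i)) l = l].  Hermiticity turns the
    row [v^+ A] into the conjugate of the column [A v = v l], i.e. into
    [conj l conj v_j], and the second identity then gives
    [(v^+ A) v = conj l], so the associator is [conj l - l = -2 Im l]. *)
From mathcomp Require Import all_boot all_order all_algebra ring.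
Set Implicit Arguments. Unset Strict Implicit. Unset Printing Implicit Defensive.
Import Order.TTheory GRing.Theory Num.Theory.
Local Open Scope ring_scope.

Section OctonionIdentities.
Variable R : realFieldType.

Definition onorm (x : oct R) : R :=
  x.1.1.1 ^+ 2 + x.1.1.2 ^+ 2 + x.1.2.1 ^+ 2 + x.1.2.2 ^+ 2 +
  x.2.1.1 ^+ 2 + x.2.1.2 ^+ 2 + x.2.2.1 ^+ 2 + x.2.2.2 ^+ 2.

(* Each identity below is a polynomial identity in the eight real coordinates. *)
Ltac oct_coords :=
  repeat match goal with x : oct R |- _ =>
    destruct x as [[[? ?] [? ?]] [[? ?] [? ?]]] end;
  cbv beta iota delta [onorm omul oconj oadd oopp osub oscale ozero oone oIm
    qadd qmul qconj qopp qscale qzero cadd cmul cconj copp cscale czero fst snd];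
  congr (((_, _), (_, _)), ((_, _), (_, _))).

Lemma oconj_add (x y : oct R) : oconj (oadd x y) = oadd (oconj x) (oconj y).
Proof. by oct_coords; ring. Qed.

Lemma oconj0 : oconj (ozero R) = ozero R.
Proof. by oct_coords; ring. Qed.

Lemma oconj_mul (x y : oct R) : oconj (omul x y) = omul (oconj y) (oconj x).
Proof. by oct_coords; ring. Qed.

Lemma oscaleDl (y : oct R) (a b : R) :
  oscale (a + b) y = oadd (oscale a y) (oscale b y).
Proof. by oct_coords; ring. Qed.

Lemma oscale0 (y : oct R) : oscale 0 y = ozero R.
Proof. by oct_coords; ring. Qed.

Lemma oscale1 (y : oct R) : oscale 1 y = y.
Proof. by oct_coords; ring. Qed.

Lemma omul_conjl (x : oct R) : omul (oconj x) x = oscale (onorm x) (oone R).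
Proof. by oct_coords; ring. Qed.

Lemma omul_conjAl (x y : oct R) : omul (oconj x) (omul x y) = oscale (onorm x) y.
Proof. by oct_coords; ring. Qed.

Lemma omul_conjAr (x y : oct R) : omul (omul y (oconj x)) x = oscale (onorm x) y.
Proof. by oct_coords; ring. Qed.

Lemma oscale_one_inj (a : R) : oscale a (oone R) = oone R -> a = 1.
Proof. by move=> /(congr1 (fun x => x.1.1.1)) /=; rewrite mulr1. Qed.

Lemma osub_conj (l : oct R) : osub (oconj l) l = oscale (-2) (oIm l).
Proof. by oct_coords; field. Qed.

Lemma oconj_sum (F : 'I_3 -> oct R) : oconj (osum F) = osum (fun i => oconj (F i)).
Proof. exact: (big_morph _ oconj_add oconj0). Qed.

Lemma osum_scale (a : 'I_3 -> R) (y : oct R) :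
  osum (fun i => oscale (a i) y) = oscale (\sum_i a i) y.
Proof. by rewrite (big_morph _ (oscaleDl y) (oscale0 y)). Qed.

End OctonionIdentities.

Section Vectors.
Variable R : realFieldType.
Implicit Types (v : ovec R) (A : omat R) (l : oct R).

Definition vnorm v : R := \sum_i onorm (v i).

Lemma dagvec_self v : dagvec v v = oscale (vnorm v) (oone R).
Proof.
rewrite /dagvec /rowcol -osum_scale /osum.
by under eq_bigr do rewrite omul_conjl.
Qed.

Lemma dagvec_vecscal v l : dagvec v (vecscal v l) = oscale (vnorm v) l.
Proof.
rewrite /dagvec /rowcol -osum_scale /osum.
by under eq_bigr do rewrite omul_conjAl.
Qed.

Lemma dagmat_Hermitian A v j : oHermitian A -> dagmat v A j = oconj (matvec A v j).
Proof.
move=> HA; rewrite /matvec oconj_sum /osum.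
by apply: eq_bigr => i _; rewrite oconj_mul HA.
Qed.

Lemma rowcol_dagmat_eigen A v l :
  oHermitian A -> matvec A v = vecscal v l ->
  rowcol (dagmat v A) v = oscale (vnorm v) (oconj l).
Proof.
move=> HA eig; rewrite /rowcol -osum_scale /osum.
by apply: eq_bigr => j _; rewrite dagmat_Hermitian // eig oconj_mul omul_conjAr.
Qed.

End Vectors.

Theorem mainTheorem5 (R : realFieldType) (A : omat R) (v : ovec R) (l : oct R) :
  oHermitian A ->
  matvec A v = vecscal v l ->
  dagvec v v = oone R ->
  dagvec v (matvec A v) = l /\
  osub (rowcol (dagmat v A) v) (dagvec v (matvec A v)) = oscale (-2)%R (oIm l).
Proof.
move=> HA eig unit.
have normv : vnorm v = 1 by apply: oscale_one_inj; rewrite -dagvec_self.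
have vAv : dagvec v (matvec A v) = l by rewrite eig dagvec_vecscal normv oscale1.
split=> //.
by rewrite vAv (rowcol_dagmat_eigen HA eig) normv oscale1 osub_conj.
Qed.
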